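(* Let $g:(0,\infty)\to(0,\infty)$ be three times continuously differentiable with $g(t)=t\,g(1/t)$ for all $t>0$, let $\mu$ be a symmetric probability density on $\mathbb{R}$ with $\int_{\mathbb{R}}g^{(j)}(e^{sw})\mu(w)dw<\infty$ for all $s>0$ and $j\in\{0,1,2,3\}$, and let $f$ be a smooth positive probability density on $\mathbb{R}$ with $\phi=\log f$. Then for all $x_i,u_i\in\mathbb{R}$, $\log\Big(\frac{f(x_i+\sigma u_i)}{f(x_i)}\frac{g(e^{-\phi'(x_i+\sigma u_i)\sigma u_i})}{g(e^{\phi'(x_i)\sigma u_i})}\Big)=\mathcal{O}(\sigma^3)$ as $\sigma\to0$.
   Context: $g^{(j)}$ is the $j$-th derivative of $g$. *)

From HB Require Import structures.
From mathcomp Require Import all_boot all_order all_algebra.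
From mathcomp Require Import all_classical all_reals all_analysis.
Set Implicit Arguments. Unset Strict Implicit. Unset Printing Implicit Defensive.
Import Order.TTheory GRing.Theory Num.Theory.
Import numFieldNormedType.Exports.
Local Open Scope classical_set_scope.
Local Open Scope ring_scope.

Definition C3_pos {R : realType} (g : R -> R) : Prop :=
  (forall k : nat, (k < 3)%N -> forall t : R, 0 < t -> derivable (derive1n k g) t 1)
  /\ (forall t : R, 0 < t -> {for t, continuous (derive1n 3 g)}).

Definition smooth {R : realType} (f : R -> R) : Prop :=
  forall (n : nat) (x : R), derivable (derive1n n f) x 1.

Definition prob_density {R : realType} (p : R -> R) : Prop :=
  (forall x, 0 <= p x) /\ measurable_fun setT p /\
  (\int[lebesgue_measure]_x (p x)%:E = 1)%E.

Definition symmetric_fun {R : realType} (p : R -> R) : Prop :=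
  forall w, p (- w) = p w.

From HB Require Import structures.
From mathcomp Require Import all_boot all_order all_algebra.
From mathcomp Require Import all_classical all_reals all_analysis.
From mathcomp Require Import ring lra.
Import Order.TTheory GRing.Theory Num.Theory.
Import numFieldNormedType.Exports.
Local Open Scope classical_set_scope.
Local Open Scope ring_scope.

(* Write p = ln f, G s = ln (g (e^s)), h = sigma u, a = p'(x) and b = p'(x + h):
   the quantity is p(x + h) - p(x) + G(-b h) - G(a h).  The symmetry
   g t = t g (1/t) reads G(-s) = G(s) - s, which forces G'(0) = 1/2.  Expanding G
   to second order at 0 turns the quantity into the trapezoid-rule error
   p(x + h) - p(x) - h (a + b) / 2 = O(h^3), plus G''(0)/2 h^2 (b^2 - a^2) + O(h^3),
   and b - a = O(h). *)

Section HasDerive.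
Context {R : realType}.
Implicit Types h k : R -> R.

Definition has_derive h h' := forall y : R, is_derive y (1 : R) h (h' y).

Lemma has_derive_cst (a : R) : has_derive (fun=> a) (fun=> 0).
Proof. by move=> y; exact: is_derive_cst. Qed.

Lemma has_derive_id : has_derive (fun y => y) (fun=> 1).
Proof. by move=> y; exact: is_derive_id. Qed.

Lemma has_deriveD {h h' k k'} : has_derive h h' -> has_derive k k' ->
  has_derive (fun y => h y + k y) (fun y => h' y + k' y).
Proof. by move=> dh dk y; exact: is_deriveD. Qed.

Lemma has_deriveN {h h'} :
  has_derive h h' -> has_derive (fun y => - h y) (fun y => - h' y).
Proof. by move=> dh y; exact: is_deriveN. Qed.

Lemma has_deriveM {h h' k k'} : has_derive h h' -> has_derive k k' ->
  has_derive (fun y => h y * k y) (fun y => h y * k' y + k y * h' y).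
Proof. by move=> dh dk y; exact: is_deriveM. Qed.

Lemma has_derive_ext {h h1 h2} : has_derive h h1 -> h1 =1 h2 -> has_derive h h2.
Proof. by move=> dh e y; rewrite -e. Qed.

Lemma has_derive_derive1 {h h'} : has_derive h h' -> derive1 h =1 h'.
Proof. by move=> dh y; rewrite derive1E; have [_ ->] := dh y. Qed.

Lemma derivable1_continuous {h y} : derivable h y 1 -> {for y, continuous h}.
Proof. by move/derivable1_diffP/differentiable_continuous. Qed.

Lemma has_derive_continuous {h h'} : has_derive h h' -> continuous h.
Proof. by move=> dh y; apply: derivable1_continuous; have [] := dh y. Qed.

Lemma has_derive_mvt {h h'} a b : has_derive h h' ->
  exists2 c, `|c - a| <= `|b - a| & h b - h a = h' c * (b - a).
Proof.
move=> dh; have ch : forall u v, {within `[u, v], continuous h}.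
  by move=> u v; apply: continuous_subspaceT; exact: has_derive_continuous dh.
have [ab|ba] := leP a b.
  have [c] := MVT_segment ab (fun y _ => dh y) (ch a b).
  rewrite in_itv /= => /andP[ac cb] ->; exists c => //.
  by rewrite !ger0_norm ?subr_ge0 // lerD2r.
have [c] := MVT_segment (ltW ba) (fun y _ => dh y) (ch b a).
rewrite in_itv /= => /andP[bc ca] e; exists c.
  by rewrite !ler0_norm ?subr_le0 ?(ltW ba) // lerN2 lerD2r.
by rewrite -opprB e -mulrN opprB.
Qed.

End HasDerive.

Ltac has_derive_rules := repeat first
  [ exact: has_derive_id | eassumption | apply: has_deriveD | apply: has_deriveN
  | apply: has_deriveM | apply: has_derive_cst ].

Section Cn.
Context {R : realType}.
Implicit Types h k : R -> R.

Fixpoint Cn n h : Prop :=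
  if n is n'.+1 then exists2 h', has_derive h h' & Cn n' h' else continuous h.

Lemma CnW {n h} : Cn n.+1 h -> Cn n h.
Proof.
elim: n h => [|n IH] h /=; first by case=> h' dh _; exact: has_derive_continuous dh.
by case=> h' dh Ch'; exists h' => //; apply: IH.
Qed.

Lemma Cn_cst n (a : R) : Cn n (fun=> a).
Proof.
elim: n a => [|n IH] a /=; first exact: cst_continuous.
by exists (fun=> 0); [exact: has_derive_cst | exact: IH].
Qed.

Lemma Cn_add {n h k} : Cn n h -> Cn n k -> Cn n (fun x => h x + k x).
Proof.
elim: n h k => [|n IH] h k /=; first by move=> ch ck x; exact: cvgD (ch x) (ck x).
move=> [h' dh Ch] [k' dk Ck]; exists (fun x => h' x + k' x); last exact: IH.
exact: has_deriveD.
Qed.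

Lemma Cn_mul {n h k} : Cn n h -> Cn n k -> Cn n (fun x => h x * k x).
Proof.
elim: n h k => [|n IH] h k; first by move=> ch ck x; exact: cvgM (ch x) (ck x).
move=> Hh Hk; have [h' dh Ch] := Hh; have [k' dk Ck] := Hk.
exists (fun x => h x * k' x + k x * h' x); first exact: has_deriveM.
by apply: Cn_add; apply: IH => //; exact: CnW.
Qed.

Lemma Cn_inv {n k} : (forall x, k x != 0) -> Cn n k -> Cn n (fun x => (k x)^-1).
Proof.
elim: n k => [|n IH] k k0; first by move=> ck x; exact: cvgV (k0 x) (ck x).
move=> Hk; have [k' dk Ck] := Hk.
exists (fun x => -1 * k' x * ((k x)^-1 * (k x)^-1)).
  move=> y; apply: is_derive_eq (is_deriveV (k0 y) (dk y)) _.
  by rewrite /GRing.scale /= expr2 invfM; ring.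
apply: Cn_mul; first exact: Cn_mul (Cn_cst _ _) Ck.
by apply: Cn_mul; apply: IH => //; exact: CnW.
Qed.

Lemma Cn_ln {n k} : (forall x, 0 < k x) -> Cn n k -> Cn n (fun x => ln (k x)).
Proof.
case: n => [|n] k0.
  by move=> ck x; exact: continuous_comp (ck x) (continuous_ln (k0 x)).
move=> Hk; have [k' dk Ck] := Hk.
exists (fun x => k' x * (k x)^-1).
  move=> y; apply: is_derive_eq (is_derive1_comp (is_derive1_ln (k0 y)) (dk y)) _.
  exact: mulrC.
apply: Cn_mul Ck (Cn_inv _ (CnW Hk)) => x; exact: lt0r_neq0.
Qed.

Lemma Cn_expR n : Cn n (@expR R).
Proof.
elim: n => [|n IH] /=; first exact: continuous_expR.
by exists expR => // y; exact: is_derive_expR.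
Qed.

Lemma Cn_derive1n {n h} :
  (forall m, (m < n)%N -> forall x, derivable (derive1n m h) x 1) ->
  continuous (derive1n n h) -> Cn n h.
Proof.
elim: n h => [|n IH] h D C //=.
exists (derive1 h); first by move=> y; rewrite derive1E; exact: derivableP (D 0%N isT y).
apply: IH; last by rewrite -derive1Sn.
by move=> m mn x; rewrite -derive1Sn; exact: D.
Qed.

Lemma Cn_comp_expR {n g} :
  (forall m, (m < n)%N -> forall t, 0 < t -> derivable (derive1n m g) t 1) ->
  (forall t, 0 < t -> {for t, continuous (derive1n n g)}) ->
  Cn n (fun s => g (expR s)).
Proof.
elim: n g => [|n IH] g D C /=.
  by move=> s; exact: continuous_comp (@continuous_expR R s) (C _ (expR_gt0 s)).
exists (fun s => derive1 g (expR s) * expR s).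
  move=> s; rewrite derive1E.
  exact: is_derive1_comp (derivableP (D 0%N isT _ (expR_gt0 s))) (is_derive_expR s).
apply: Cn_mul (Cn_expR n); apply: IH => [m mn t t0|t t0]; rewrite -derive1Sn;
  [exact: D | exact: C].
Qed.

End Cn.

Section LocalPowerBounds.
Context {R : realType}.
Implicit Types (F G b : R -> R) (c : R).

(* [F t = O((t - c) ^ n)] as [t -> c], with an explicit constant that the mean
   value theorem can propagate (bigO_pow_mvt). *)
Definition bigO_pow c n F :=
  exists2 K, 0 <= K & \forall t \near c, `|F t| <= K * `|t - c| ^+ n.

Lemma bigO_pow_ext {c n F G} : F =1 G -> bigO_pow c n F -> bigO_pow c n G.
Proof. by move=> e [K K0 HF]; exists K => //; apply: filterS HF => t; rewrite e. Qed.

Lemma continuous_bigO_pow0 {c F} : {for c, continuous F} -> bigO_pow c 0 F.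
Proof.
move=> Fc; exists (`|F c| + 1); first by rewrite addr_ge0.
apply: filterS (cvgr_distC_lt (F := nbhs c) _ _ Fc _ ltr01) => t Ft.
by have := lerB_dist (F t) (F c); rewrite expr0 mulr1; lra.
Qed.

Lemma bigO_pow_cst c (a : R) : bigO_pow c 0 (fun=> a).
Proof. by apply: continuous_bigO_pow0; exact: cvg_cst. Qed.

Lemma bigO_pow_sub c : bigO_pow c 1 (fun t => t - c).
Proof. by exists 1 => //; apply: (nearW (F := nbhs c)) => t; rewrite expr1 mul1r. Qed.

Lemma bigO_powD {c n F G} : bigO_pow c n F -> bigO_pow c n G ->
  bigO_pow c n (fun t => F t + G t).
Proof.
move=> [KF KF0 HF] [KG KG0 HG]; exists (KF + KG); first exact: addr_ge0.
apply: filterS2 HF HG => t hF hG; rewrite mulrDl.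
exact: le_trans (ler_normD _ _) (lerD hF hG).
Qed.

Lemma bigO_powN {c n F} : bigO_pow c n F -> bigO_pow c n (fun t => - F t).
Proof. by move=> [K K0 HF]; exists K => //; apply: filterS HF => t; rewrite normrN. Qed.

Lemma bigO_powM {c m n F G} : bigO_pow c m F -> bigO_pow c n G ->
  bigO_pow c (m + n) (fun t => F t * G t).
Proof.
move=> [KF KF0 HF] [KG KG0 HG]; exists (KF * KG); first exact: mulr_ge0.
apply: filterS2 HF HG => t hF hG; rewrite normrM exprD mulrACA.
exact: ler_pM.
Qed.

Lemma bigO_pow_mvt {c n F F'} : has_derive F F' -> F c = 0 ->
  bigO_pow c n F' -> bigO_pow c n.+1 F.
Proof.
move=> dF Fc0 [K K0 /nbhs_ballP[d /= d0 HF']]; exists K => //.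
apply/nbhs_ballP; exists d => // t /= ct.
have [xi xic e] := has_derive_mvt c t dF.
have xid : ball c d xi by rewrite /ball /= distrC (le_lt_trans xic) // distrC.
rewrite -[F t]subr0 -Fc0 e normrM exprSr mulrA ler_wpM2r //.
apply: le_trans (HF' _ xid) _; rewrite ler_wpM2l // lerXn2r // nnegrE.
Qed.

Lemma has_derive_bigO_pow1 {c F F'} : has_derive F F' -> {for c, continuous F'} ->
  bigO_pow c 1 (fun t => F t - F c).
Proof.
move=> dF F'c; apply: bigO_pow_mvt (continuous_bigO_pow0 F'c); last exact: subrr.
apply: has_derive_ext; first by apply: has_deriveD dF (has_deriveN (has_derive_cst _)).
by move=> y /=; rewrite oppr0 addr0.
Qed.

Lemma bigO_pow_shift {c n F} : bigO_pow c n F -> bigO_pow 0 n (fun h => F (c + h)).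
Proof.
move=> [K K0 /nbhs0P HF]; exists K => //.
by apply: filterS HF => h; rewrite addrC addrK subr0.
Qed.

Lemma bigO_pow_comp_mul {n F b} : bigO_pow 0 n F -> bigO_pow 0 0 b ->
  bigO_pow 0 n (fun h => F (b h * h)).
Proof.
move=> [K K0 HF] [B B0 Hb]; exists (K * B ^+ n); first by rewrite mulr_ge0 ?exprn_ge0.
have bh0 : (fun h => b h * h) @ 0 --> 0.
  apply/cvgr0Pnorm_lt => e e0.
  have B1 : 0 < B + 1 by rewrite ltr_wpDl.
  apply: filterS2 Hb (nbhs0_lt (V := R) (divr_gt0 e0 B1)) => h hb he.
  rewrite subr0 expr0 mulr1 in hb; rewrite ltr_pdivlMr // in he.
  rewrite normrM; have := normr_ge0 h; have := normr_ge0 (b h); nra.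
apply: filterS2 Hb (bh0 _ HF) => h hb /= hF.
rewrite !subr0 expr0 mulr1 in hb hF *.
apply: le_trans hF _; rewrite normrM exprMn mulrA ler_wpM2r ?exprn_ge0 //.
by rewrite ler_wpM2l // lerXn2r // nnegrE.
Qed.

Lemma bigO_pow_eqO {n F} : bigO_pow 0 n F -> F =O_ (0 : R) (fun s => s ^+ n).
Proof.
move=> [K K0 HF]; apply/eqO_exP; exists (K + 1); first by rewrite ltr_wpDl.
apply: filterS HF => s; rewrite subr0 normrX => /le_trans; apply.
by rewrite ler_wpM2r ?exprn_ge0 // lerDl.
Qed.

End LocalPowerBounds.

Section LocalExpansions.
Context {R : realType}.
Implicit Types (p G : R -> R) (c x : R).

Lemma trapezoid_error {p p1} x : has_derive p p1 -> Cn 2 p1 ->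
  bigO_pow x 3 (fun y => p y - p x - (y - x) * (p1 x + p1 y) / 2).
Proof.
move=> dp [p2 dp1 [p3 dp2 Cp3]].
have dE : has_derive (fun y => p y - p x - (y - x) * (p1 x + p1 y) / 2)
                     (fun y => (p1 y - p1 x) / 2 - (y - x) * p2 y / 2).
  by apply: has_derive_ext; [has_derive_rules | move=> y /=; field].
have dE1 : has_derive (fun y => (p1 y - p1 x) / 2 - (y - x) * p2 y / 2)
                      (fun y => - 2^-1 * ((y - x) * p3 y)).
  by apply: has_derive_ext; [has_derive_rules | move=> y /=; field].
apply: bigO_pow_mvt dE _ _; first by field.
apply: bigO_pow_mvt dE1 _ _; first by field.
exact: bigO_powM (bigO_pow_cst x (- 2^-1))
         (bigO_powM (bigO_pow_sub x) (continuous_bigO_pow0 (Cp3 x))).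
Qed.

Lemma taylor2_error {G G1 G2} c : has_derive G G1 -> has_derive G1 G2 -> Cn 1 G2 ->
  bigO_pow c 3 (fun t => G t - G c - G1 c * (t - c) - G2 c / 2 * ((t - c) * (t - c))).
Proof.
move=> dG dG1 [G3 dG2 CG3].
have dP : has_derive
    (fun t => G t - G c - G1 c * (t - c) - G2 c / 2 * ((t - c) * (t - c)))
    (fun t => G1 t - G1 c - G2 c * (t - c)).
  by apply: has_derive_ext; [has_derive_rules | move=> t /=; field].
have dP1 : has_derive (fun t => G1 t - G1 c - G2 c * (t - c)) (fun t => G2 t - G2 c).
  by apply: has_derive_ext; [has_derive_rules | move=> t /=; field].
apply: bigO_pow_mvt dP _ _; first by field.
apply: bigO_pow_mvt dP1 _ _; first by field.
exact: has_derive_bigO_pow1 dG2 (CG3 c).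
Qed.

Lemma has_derive_half_at0 {G G1} : has_derive G G1 ->
  (forall s, G (- s) = G s - s) -> G1 0 = 2^-1.
Proof.
move=> dG Gsym.
have dGN : is_derive (0 : R) 1 (fun s => G (- s)) (G1 (- 0) * -1).
  exact: (@is_derive1_comp R G -%R 0 _ _ (dG (- 0)) (is_deriveNid (0 : R) (1 : R))).
have dGB : has_derive (fun s => G s - s) (fun s => G1 s - 1) by has_derive_rules.
have /funext eG : (fun s => G (- s)) =1 (fun s => G s - s) by [].
rewrite eG oppr0 in dGN; have [_ e1] := dGN; have [_ e2] := dGB 0.
rewrite e2 in e1; lra.
Qed.

Lemma cubic_cancellation {p p1 G G1} x : has_derive p p1 -> Cn 2 p1 ->
  has_derive G G1 -> Cn 2 G1 -> (forall s, G (- s) = G s - s) ->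
  bigO_pow 0 3 (fun h => p (x + h) - p x + (G (- (p1 (x + h) * h)) - G (p1 x * h))).
Proof.
move=> dp Cp1 dG [G2 dG1 CG2] Gsym.
have G10 := has_derive_half_at0 dG Gsym.
have [p2 dp1 Cp2] := Cp1.
pose P s := G s - G 0 - G1 0 * (s - 0) - G2 0 / 2 * ((s - 0) * (s - 0)).
have HP : bigO_pow 0 3 P := taylor2_error 0 dG dG1 CG2.
have Ha := bigO_pow_cst 0 (p1 x).
have Hb : bigO_pow 0 0 (fun h => p1 (x + h)).
  exact: bigO_pow_shift (continuous_bigO_pow0 (has_derive_continuous dp1 x)).
have Hba : bigO_pow 0 1 (fun h => p1 (x + h) - p1 x).
  exact: bigO_pow_shift (has_derive_bigO_pow1 dp1 (CnW (Cp2 : Cn 1 p2) x)).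
have Hsq : bigO_pow 0 2 (fun h : R => (h - 0) * (h - 0)).
  exact: bigO_powM (bigO_pow_sub 0) (bigO_pow_sub 0).
have Htrap := bigO_pow_shift (trapezoid_error x dp Cp1).
have HPba := bigO_powD (bigO_pow_comp_mul HP Hb) (bigO_powN (bigO_pow_comp_mul HP Ha)).
have Hquad := bigO_powM (bigO_powM (bigO_pow_cst 0 (G2 0 / 2)) Hsq)
                        (bigO_powM Hba (bigO_powD Hb Ha)).
(* With a = p1 x and b = p1 (x + h), the quantity is the trapezoid error, plus
   P (b h) - P (a h), plus G2 0 / 2 * h^2 * (b - a) * (b + a). *)
apply: bigO_pow_ext (bigO_powD (bigO_powD Htrap HPba) Hquad).
by move=> h /=; rewrite Gsym /P G10; field.
Qed.

End LocalExpansions.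

Theorem lemma12 (R : realType) (g mu f : R -> R)
  (g_pos : forall t : R, 0 < t -> 0 < g t)
  (g_C3 : C3_pos g)
  (g_sym : forall t : R, 0 < t -> g t = t * g t^-1)
  (mu_dens : prob_density mu) (mu_sym : symmetric_fun mu)
  (mu_int : forall s : R, 0 < s -> forall j : nat, (j <= 3)%N ->
     lebesgue_measure.-integrable setT
       (fun w : R => (derive1n j g (expR (s * w)) * mu w)%:E))
  (f_smooth : smooth f) (f_pos : forall x, 0 < f x) (f_dens : prob_density f)
  (x u : R) :
  let phi := fun y : R => ln (f y) in
  (fun sigma : R =>
     ln (f (x + sigma * u) / f x *
         (g (expR (- derive1 phi (x + sigma * u) * (sigma * u))) /
          g (expR (derive1 phi x * (sigma * u))))))
    =O_ (0 : R) (fun sigma : R => sigma ^+ 3).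
Proof.
move=> phi.
have Cf : Cn 3 f.
  by apply: Cn_derive1n => [m _ y|y]; [|apply: derivable1_continuous]; exact: f_smooth.
have [phi' dphi Cphi'] : Cn 3 phi := Cn_ln f_pos Cf.
pose G s := ln (g (expR s)).
have gexp_pos s : 0 < g (expR s) by apply: g_pos; exact: expR_gt0.
have [G' dG CG'] : Cn 3 G := Cn_ln gexp_pos (Cn_comp_expR g_C3.1 g_C3.2).
have fp y : f y \is Num.pos by rewrite posrE.
have gp s : g (expR s) \is Num.pos by rewrite posrE.
have Gsym s : G (- s) = G s - s.
  by rewrite /G (g_sym _ (expR_gt0 s)) -expRN lnM ?expRK ?posrE ?expR_gt0 //; ring.
apply: bigO_pow_eqO.
apply: bigO_pow_ext (bigO_pow_comp_mul (cubic_cancellation x dphi Cphi' dG CG' Gsym)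
                                      (bigO_pow_cst 0 u)) => s /=.
by rewrite !(has_derive_derive1 dphi) lnM ?ln_div ?rpred_div // mulNr (mulrC u s).
Qed.
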